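(* Let $n\ge 5$, let $M$ be a matching of the complete graph $K_n$, and let $G=K_n\setminus M$ be the graph obtained from $K_n$ by deleting the edges of $M$. If $M$ is a perfect matching, then $\gamma_3(G)=4$; otherwise $\gamma_3(G)=3$.
   Context: In a graph $G=(V,E)$, a vertex dominates itself and its neighbours. A set $S\subseteq V$ is a three dominating set of $G$ if every vertex in $V\setminus S$ is dominated by at least three vertices of $S$ (equivalently, every vertex of $V\setminus S$ has at least three neighbours in $S$). The three domination number $\gamma_3(G)$ is the minimum cardinality of a three dominating set of $G$. *)

From mathcomp Require Import all_boot all_order.
Set Implicit Arguments. Unset Strict Implicit. Unset Printing Implicit Defensive.

(* A simple graph on a finite vertex type T is given by an adjacency relation e
   (assumed symmetric and irreflexive where needed). *)

Definition nbhd (T : finType) (e : rel T) (v : T) : {set T} := [set u | e v u].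

Definition three_dominating (T : finType) (e : rel T) (S : {set T}) : bool :=
  [forall v, (v \notin S) ==> (3 <= #|nbhd e v :&: S|)].

(* three domination number: minimum cardinality of a three dominating set
   (the full vertex set is always three dominating, so #|T| is a valid bound). *)
Definition gamma3 (T : finType) (e : rel T) : nat :=
  \big[minn/#|T|]_(S : {set T} | three_dominating e S) #|S|.

Definition is_matching (n : nat) (M : rel 'I_n) : Prop :=
  (forall x y, M x y -> x != y) /\
  (forall x y, M x y = M y x) /\
  (forall x y z, M x y -> M x z -> y = z).

Definition perfect_matching (n : nat) (M : rel 'I_n) : Prop :=
  forall x, exists y, M x y.

Definition Kn_minus (n : nat) (M : rel 'I_n) : rel 'I_n :=
  fun x y => (x != y) && ~~ M x y.

From mathcomp Require Import all_boot all_order.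

Set Implicit Arguments.
Unset Strict Implicit.
Unset Printing Implicit Defensive.

(* If a set S is closed under the matching M, then a vertex v outside S has
   its partner outside S, so v is adjacent in K_n - M to every vertex of S:
   every M-closed set of size at least 3 is three dominating.  Conversely, if
   s in S has its partner p outside S, then p sees at most #|S| - 1 vertices
   of S, so a three dominating set of size 3 is M-closed.  Since a perfect
   matching pairs off the vertices of any closed set, closed sets have even
   size, which rules out size 3 exactly when M is perfect. *)

Section ThreeDominationNumber.

Variables (T : finType) (e : rel T).

Lemma gamma3_min S : three_dominating e S -> gamma3 e <= #|S|.
Proof.
move=> tdS; rewrite /gamma3.
have : S \in index_enum {set T} by rewrite mem_index_enum.
elim: (index_enum _) => [//|X r IHr]; rewrite inE big_cons.
case/orP => [/eqP <-|/IHr le_r]; first by rewrite tdS geq_minl.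
by case: ifP => _ //; apply: leq_trans le_r; apply: geq_minr.
Qed.

Lemma gamma3_geq k :
  k <= #|T| -> (forall S, three_dominating e S -> k <= #|S|) -> k <= gamma3 e.
Proof.
move=> le_kT le_kS; apply: (big_ind (fun m => k <= m)) => // x y kx ky.
by rewrite leq_min kx ky.
Qed.

Lemma gamma3_eq S0 k :
  three_dominating e S0 -> #|S0| = k ->
  (forall S, three_dominating e S -> k <= #|S|) -> gamma3 e = k.
Proof.
move=> tdS0 S0k le_kS; apply/eqP; rewrite eqn_leq -{1}S0k gamma3_min //.
by rewrite gamma3_geq // -S0k max_card.
Qed.

Lemma three_dominating_card_ge3 S :
  3 <= #|T| -> three_dominating e S -> 3 <= #|S|.
Proof.
move=> T3 /forallP tdS; have [->|] := eqVneq S setT; first by rewrite cardsT.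
rewrite -properT => /properP [_ [v _ vNS]].
apply: leq_trans (implyP (tdS v) vNS) _.
by apply/subset_leq_card/subsetIr.
Qed.

End ThreeDominationNumber.

Section MatchingComplement.

Variables (n : nat) (M : rel 'I_n).

Lemma closed_three_dominating (S : {set 'I_n}) :
  closed M S -> 3 <= #|S| -> three_dominating (Kn_minus M) S.
Proof.
move=> clS S3; apply/forallP => v; apply/implyP => vNS.
suff -> : nbhd (Kn_minus M) v :&: S = S by [].
apply/setIidPr/subsetP => s sS; rewrite inE /Kn_minus.
apply/andP; split; first by apply: contraNneq vNS => ->.
by apply/negP => /clS vs; rewrite vs sS in vNS.
Qed.

Lemma three_dominating_partner_out S s p :
  three_dominating (Kn_minus M) S -> s \in S -> p \notin S -> M p s ->
  4 <= #|S|.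
Proof.
move=> /forallP /(_ p) /implyP tdS sS pNS Mps.
rewrite (cardsD1 s S) sS ltnS; apply: leq_trans (tdS pNS) _.
apply/subset_leq_card/subsetP => x; rewrite !inE /Kn_minus => /andP [/andP [_]].
by case: (x =P s) => [->|_ _ ->]; rewrite ?Mps.
Qed.

Hypothesis M_sym : symmetric M.

Lemma three_dominating_small_closed (S : {set 'I_n}) :
  three_dominating (Kn_minus M) S -> #|S| < 4 -> closed M S.
Proof.
move=> tdS S4; apply: intro_closed; first exact: sym_connect_sym.
move=> s p Msp sS; apply: contraLR S4 => pNS; rewrite -leqNgt.
by rewrite M_sym in Msp; apply: three_dominating_partner_out tdS sS pNS Msp.
Qed.

End MatchingComplement.

Section Matching.

Variables (n : nat) (M : rel 'I_n).
Hypothesis M_matching : is_matching M.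

Let M_irr {x y} : M x y -> x != y.
Proof. by case: M_matching => irr _; apply: irr. Qed.
Let M_sym : symmetric M. Proof. by case: M_matching => _ []. Qed.
Let M_fun {x y z} : M x y -> M x z -> y = z.
Proof. by case: M_matching => _ [_ fun_M]; apply: fun_M. Qed.

Section PerfectMatching.

Hypothesis M_perfect : perfect_matching M.

Definition partner x := odflt x [pick y | M x y].

Lemma partnerP x : M x (partner x).
Proof.
rewrite /partner; case: pickP => [//|noM].
by have [y Mxy] := M_perfect x; rewrite noM in Mxy.
Qed.

Lemma partner_eq x y : M x y -> partner x = y.
Proof. exact: M_fun (partnerP x). Qed.

Lemma partnerK : involutive partner.
Proof. by move=> x; apply: partner_eq; rewrite M_sym partnerP. Qed.

Lemma partner_neq x : partner x != x.
Proof. by rewrite eq_sym M_irr ?partnerP. Qed.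

Lemma order_partner x : order partner x = 2.
Proof.
have cyc : fcycle partner [:: x; partner x] by rewrite /= partnerK !eqxx.
by rewrite (order_cycle cyc) ?mem_head //= inE eq_sym partner_neq.
Qed.

Lemma closed_card_even (S : {set 'I_n}) : closed M S -> ~~ odd #|S|.
Proof.
move=> clS; rewrite -(fcard_order_set (inv_inj partnerK) (n := 2)).
- by rewrite muln2 odd_double.
- by apply/subsetP => x _; rewrite inE order_partner.
- by move=> x y /eqP <-; apply: clS; apply: partnerP.
Qed.

Lemma three_dominating_card_ge4 S :
  3 <= n -> three_dominating (Kn_minus M) S -> 4 <= #|S|.
Proof.
move=> n3 tdS; rewrite ltn_neqAle (three_dominating_card_ge3 _ tdS) ?card_ord // andbT.
apply/eqP => S3; have clS : closed M S.
  by apply: (three_dominating_small_closed M_sym tdS); rewrite -S3.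
by have := closed_card_even clS; rewrite -S3.
Qed.

Lemma closed_quadruple : 3 <= n -> exists S : {set 'I_n}, closed M S /\ #|S| = 4.
Proof.
move=> n3; have n0 : 0 < n by apply: leq_trans n3.
pose a := Ordinal n0; pose b := partner a.
have [c cNab] : exists c, c \notin [set a; b].
  apply/existsP; rewrite -negb_forall; apply/forallP => all_ab.
  have : #|'I_n| <= #|[set a; b]| by apply/subset_leq_card/subsetP => c _.
  by rewrite card_ord cards2 => /(leq_trans n3); case: (_ != _).
move: cNab; rewrite !inE negb_or => /andP [ca cb]; pose d := partner c.
exists [set x in [:: a; b; c; d]]; split.
  apply: intro_closed; first exact: sym_connect_sym.
  move=> x y /partner_eq <-; rewrite !inE.
  by case/or4P => /eqP ->; rewrite /b /d ?partnerK eqxx ?orbT.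
have da : d != a by rewrite -(inj_eq (inv_inj partnerK)) partnerK.
have db : d != b by rewrite (inj_eq (inv_inj partnerK)).
rewrite cardsE; apply/card_uniqP; rewrite /= !inE !negb_or.
have ab : a != b by rewrite eq_sym partner_neq.
have cd : c != d by rewrite eq_sym partner_neq.
by rewrite ab cd ![a == _]eq_sym ![b == _]eq_sym ca cb da db.
Qed.

End PerfectMatching.

Lemma unmatched_vertex : ~ perfect_matching M -> exists x, forall y, ~~ M x y.
Proof.
move=> M_imperfect.
have [/existsP [x /forallP xNM]|] := boolP [exists x, [forall y, ~~ M x y]].
  by exists x.
rewrite negb_exists => /forallP all_matched; case: M_imperfect => x.
by have := all_matched x; rewrite negb_forall => /existsP [y]; rewrite negbK; exists y.
Qed.

Lemma closed_triple :
  3 <= n -> ~ perfect_matching M -> exists S : {set 'I_n}, closed M S /\ #|S| = 3.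
Proof.
move=> n3 /unmatched_vertex [x xNM].
have [/existsP [a /existsP [b Mab]]|noM] := boolP [exists a, exists b, M a b]; last first.
  have /card_geqP [s [s_uniq s3 _]] : 3 <= #|'I_n| by rewrite card_ord.
  exists [set y in s]; split; last by rewrite cardsE (card_uniqP s_uniq).
  by move=> u v Muv; case/negP: noM; apply/existsP; exists u; apply/existsP; exists v.
exists [set y in [:: x; a; b]]; split.
  apply: intro_closed; first exact: sym_connect_sym.
  move=> u v Muv; rewrite !inE => /or3P [] /eqP Eu; subst u.
  - by rewrite (negbTE (xNM v)) in Muv.
  - by rewrite (M_fun Muv Mab) eqxx !orbT.
  - by rewrite M_sym in Mab; rewrite (M_fun Muv Mab) eqxx !orbT.
have xa : x != a by apply: contraNneq (xNM b) => ->.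
have xb : x != b by apply: contraNneq (xNM a) => ->; rewrite M_sym.
by rewrite cardsE; apply/card_uniqP; rewrite /= !inE !negb_or xa xb M_irr.
Qed.

End Matching.

Theorem theorem2p7 (n : nat) (M : rel 'I_n) :
  5 <= n -> is_matching M ->
  (perfect_matching M -> gamma3 (Kn_minus M) = 4) /\
  (~ perfect_matching M -> gamma3 (Kn_minus M) = 3).
Proof.
move=> n5 M_matching; have n3 : 3 <= n by apply: leq_trans n5.
split=> [M_perfect | M_imperfect].
- have [S [clS S4]] := closed_quadruple M_matching M_perfect n3.
  apply: (gamma3_eq (closed_three_dominating clS _) S4) => [|S']; first by rewrite S4.
  exact: three_dominating_card_ge4.
- have [S [clS S3]] := closed_triple M_matching n3 M_imperfect.
  apply: (gamma3_eq (closed_three_dominating clS _) S3) => [|S']; first by rewrite S3.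
  by apply: three_dominating_card_ge3; rewrite card_ord.
Qed.
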